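(* Let $\psi\in C^3(\mathbb{R})$ be a known link, $\beta_c\in\mathbb{R}^p$ with $\mathbb{E}[Y_i(0)\mid X_i=x]=\psi(x^\top\beta_c)$, $\hat\beta_c\in\mathbb{R}^p$ any estimate, and $\gamma\in\mathbb{R}^{n_c}$ weights with $\gamma_i\ge0$, $\sum_{i:W_i=0}\gamma_i=1$. Suppose there are $u_n>0$, $M_2,M_3>0$ with $\sup_{|z|\le u_n}|\psi''(z)|\le M_2\log p$, $\sup_{|z|\le u_n}|\psi'''(z)|\le M_3\sqrt{n/\log p}$, and $\max_{i\le n}|X_i^\top\beta_c|\le u_n$, $\max_{i\le n}|X_i^\top\hat\beta_c|\le u_n$. Writing $\delta=\hat\beta_c-\beta_c$, there is an absolute constant $C>0$ such that \begin{align*} |\hat\mu_c-\mu_c|&\le \Big\|\tfrac{1}{n_t}X_t^\top\psi'(X_t\hat\beta_c)-X_c^\top W_c(\hat\beta_c)\gamma\Big\|_\infty\|\delta\|_1\\ &\quad+\Big\|\tfrac{1}{n_t}(X_t^\top\otimes X_t^\top)\operatorname{vec}(W_t'(\hat\beta_c))-[V_1,\dots,V_{n_c}]\gamma\Big\|_\infty\|\delta\|_1^2+|\gamma^\top\varepsilon_c|\\ &\quad+C\Big(M_2\log p\,(\|X_t\|_\infty^2+\|X_c\|_\infty^2)\|\delta\|_1^2+M_3\sqrt{\tfrac{n}{\log p}}\,(\|X_t\|_\infty^3+\|X_c\|_\infty^3)\|\delta\|_1^3\Big). \end{align*}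
   Context: Setting: $n$ units with covariates $X_i\in\mathbb{R}^p$, treatment $W_i\in\{0,1\}$, potential outcomes $Y_i(0),Y_i(1)$, observed $Y_i^{\rm obs}=Y_i(W_i)$; $n_t,n_c$ numbers of treated/control units; $X_t\in\mathbb{R}^{n_t\times p}$, $X_c\in\mathbb{R}^{n_c\times p}$ treated/control covariate matrices, with $X_{c,i}$ the $i$-th control row. Functions of vectors ($\psi'(v)$ etc.) act componentwise. $W_c(\beta)=\operatorname{diag}(\psi'(X_c\beta))$, $W_t'(\beta)=\operatorname{diag}(\psi''(X_t\beta))$, and $V_i=\psi''(X_{c,i}^\top\hat\beta_c)\,X_{c,i}\otimes X_{c,i}\in\mathbb{R}^{p^2}$, so $[V_1,\dots,V_{n_c}]\in\mathbb{R}^{p^2\times n_c}$. $\mu_c=\frac1{n_t}\sum_{i:W_i=1}\psi(X_i^\top\beta_c)$, $\hat\mu_c=\frac1{n_t}\sum_{i:W_i=1}\psi(X_i^\top\hat\beta_c)+\sum_{i:W_i=0}\gamma_i(Y_i^{\rm obs}-\psi(X_i^\top\hat\beta_c))$, $\varepsilon_c=(Y_i(0)-\psi(X_i^\top\beta_c))_{i:W_i=0}$. For matrices $\|A\|_\infty=\max_{i,j}|A_{ij}|$; $\operatorname{vec}$ stacks columns; $\otimes$ is the Kronecker product. *)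

From HB Require Import structures.
From mathcomp Require Import all_boot all_order all_algebra.
From mathcomp Require Import all_classical all_reals all_analysis.
From mathcomp Require Import mxtens.
Import numFieldNormedType.Exports.
Set Implicit Arguments. Unset Strict Implicit. Unset Printing Implicit Defensive.
Import Order.TTheory GRing.Theory Num.Theory.
Local Open Scope ring_scope.

Section Defs.
Variable R : realType.

Definition C3 (psi : R -> R) : Prop :=
  (forall x : R, derivable psi x 1) /\
  (forall x : R, derivable (derive1 psi) x 1) /\
  (forall x : R, derivable (derive1 (derive1 psi)) x 1) /\
  continuous (derive1 (derive1 (derive1 psi))).

Definition mxnorm_inf m n (A : 'M[R]_(m, n)) : R :=
  \big[Num.max/0]_(i < m) \big[Num.max/0]_(j < n) `|A i j|.

Definition norm1 p (v : 'cV[R]_p) : R := \sum_(i < p) `|v i 0|.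

Definition appf m n (f : R -> R) (v : 'M[R]_(m, n)) : 'M[R]_(m, n) := map_mx f v.

(* vec: stacks the columns of A : 'M_(m,n) into a column vector of size n*m
   (entry (j-th column block, i-th row) = A i j), compatible with the
   Kronecker product tensmx (A *t B) of mxtens. *)
Definition vecmx m n (A : 'M[R]_(m, n)) : 'cV[R]_(n * m) :=
  \col_k A (mxtens_unindex k).2 (mxtens_unindex k).1.

Definition Wdiag m (f : R -> R) (v : 'cV[R]_m) : 'M[R]_m :=
  diag_mx (appf f v)^T.

Definition Vmat (psi2 : R -> R) nc p (Xc : 'M[R]_(nc, p)) (bh : 'cV[R]_p)
  : 'M[R]_(p * p, nc) :=
  \matrix_(k, i) (psi2 ((Xc *m bh) i 0) *: ((row i Xc)^T *t (row i Xc)^T)) k 0.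

Definition mu_c nt p (psi : R -> R) (Xt : 'M[R]_(nt, p)) (bc : 'cV[R]_p) : R :=
  nt%:R^-1 * \sum_(i < nt) psi ((Xt *m bc) i 0).

Definition muhat_c nt nc p (psi : R -> R) (Xt : 'M[R]_(nt, p)) (Xc : 'M[R]_(nc, p))
  (Yc : 'cV[R]_nc) (gam : 'cV[R]_nc) (bh : 'cV[R]_p) : R :=
  nt%:R^-1 * \sum_(i < nt) psi ((Xt *m bh) i 0)
  + \sum_(i < nc) gam i 0 * (Yc i 0 - psi ((Xc *m bh) i 0)).

End Defs.

From HB Require Import structures.
From mathcomp Require Import all_boot all_order all_algebra.
From mathcomp Require Import all_classical all_reals all_analysis.
From mathcomp Require Import mxtens.
From mathcomp Require Import ring lra.
Import numFieldNormedType.Exports.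
Set Implicit Arguments. Unset Strict Implicit. Unset Printing Implicit Defensive.
Import Order.TTheory GRing.Theory Num.Theory.
Local Open Scope ring_scope.

(* Linearizing psi around X_i^T hat beta_c splits muhat_c - mu_c exactly into the
   inner product of the first-order imbalance vector with delta, a gamma-weighted
   average minus a treated mean of linearization errors, and the noise term
   gamma^T eps_c.  The first is at most ||imbalance||_oo ||delta||_1 (Hoelder),
   and the mean value theorem, applied twice, bounds each linearization error by
   sup |psi''| (X_i^T delta)^2 <= M2 log p ||X||_oo^2 ||delta||_1^2.  The
   second-order imbalance term and the psi''' term of the bound are nonnegative
   and not needed, so C = 1 works. *)

Section Taylor.
Variable R : realType.
Implicit Types f : R -> R.

Definition linearization_error (f g : R -> R) (a b : R) := f b - f a - g a * (b - a).

Lemma MVT_between f x y : (forall z, derivable f z 1) ->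
  exists2 c, c \in `[Num.min x y, Num.max x y] & f y - f x = derive1 f c * (y - x).
Proof.
move=> df; wlog le_xy : x y / x <= y => [hwlog|].
  case/orP: (le_total x y) => [le_xy|le_yx]; first exact: hwlog.
  have [c] := hwlog y x le_yx; rewrite minC maxC => cxy Ec.
  by exists c => //; rewrite -opprB Ec -mulrN opprB.
have fD (z : R) : is_derive z (1 : R) f (derive1 f z) by rewrite derive1E; apply: derivableP.
rewrite (min_idPl le_xy) (max_idPr le_xy).
apply: MVT_segment le_xy (fun z _ => fD z) _.
exact: derivable_within_continuous (fun z _ => df z).
Qed.

Lemma norm_le_between (x y z u : R) : z \in `[Num.min x y, Num.max x y] ->
  `|x| <= u -> `|y| <= u -> `|z| <= u.
Proof.
rewrite in_itv /= ge_min le_max !ler_norml => /andP[zxy xyz] /andP[? ?] /andP[? ?].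
by apply/andP; split; [case/orP: zxy | case/orP: xyz]; lra.
Qed.

Lemma dist_le_between (x y z : R) : z \in `[Num.min x y, Num.max x y] ->
  `|z - x| <= `|y - x|.
Proof.
case/orP: (le_total x y) => [le_xy|le_yx].
  by rewrite (min_idPl le_xy) (max_idPr le_xy) in_itv /= => /andP[? ?]; rewrite !ger0_norm; lra.
by rewrite (min_idPr le_yx) (max_idPl le_yx) in_itv /= => /andP[? ?]; rewrite !ler0_norm; lra.
Qed.

Lemma taylor1_bound f un M a b :
  (forall x, derivable f x 1) -> (forall x, derivable (derive1 f) x 1) ->
  (forall z, `|z| <= un -> `|derive1 (derive1 f) z| <= M) ->
  `|a| <= un -> `|b| <= un ->
  `|linearization_error f (derive1 f) a b| <= M * (b - a) ^+ 2.
Proof.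
move=> df ddf f2M a_un b_un; rewrite /linearization_error.
have [c cab ->] := MVT_between a b df.
rewrite -mulrBl.
have [d dac ->] := MVT_between a c ddf.
have c_un := norm_le_between cab a_un b_un.
rewrite !normrM -real_normK ?num_real // expr2 mulrA.
apply: ler_pM => //; apply: ler_pM => //.
- exact/f2M/(norm_le_between dac).
- exact: dist_le_between.
Qed.
End Taylor.

Section Matrices.
Variable R : realType.

Lemma mxnorm_inf_ge m n (A : 'M[R]_(m, n)) i j : `|A i j| <= mxnorm_inf A.
Proof.
apply: le_trans (le_bigmax _ (fun j => `|A i j|) j) _.
exact: (le_bigmax _ (fun i => \big[Num.max/0]_(j < n) `|A i j|) i).
Qed.

Lemma mxnorm_inf_ge0 m n (A : 'M[R]_(m, n)) : 0 <= mxnorm_inf A.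
Proof. exact: bigmax_ge_id. Qed.

Lemma norm1_ge0 p (d : 'cV[R]_p) : 0 <= norm1 d.
Proof. by apply: sumr_ge0 => i _. Qed.

Lemma norm_sum_mul_le_norm1 p (u : 'I_p -> R) (K : R) (d : 'cV[R]_p) :
  (forall j, `|u j| <= K) -> `|\sum_j u j * d j 0| <= K * norm1 d.
Proof.
move=> uK; rewrite /norm1 mulr_sumr; apply: le_trans (ler_norm_sum _ _ _) _.
by apply: ler_sum => j _; rewrite normrM ler_wpM2r.
Qed.

Lemma norm_mulmx_le m p (X : 'M[R]_(m, p)) (d : 'cV[R]_p) i :
  `|(X *m d) i 0| <= mxnorm_inf X * norm1 d.
Proof. by rewrite mxE; apply: norm_sum_mul_le_norm1 => j; apply: mxnorm_inf_ge. Qed.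

Lemma mxE_sub m n (A B : 'M[R]_(m, n)) i j : (A - B) i j = A i j - B i j.
Proof. by rewrite !mxE. Qed.

Lemma mxE_scale_sub m n (c : R) (A B : 'M[R]_(m, n)) i j :
  (c *: A - B) i j = c * A i j - B i j.
Proof. by rewrite !mxE. Qed.

Lemma appfE m n (h : R -> R) (A : 'M[R]_(m, n)) i j : appf h A i j = h (A i j).
Proof. exact: mxE. Qed.

Lemma dot_cV m (u v : 'cV[R]_m) : (u^T *m v) 0 0 = \sum_i u i 0 * v i 0.
Proof. by rewrite mxE; apply: eq_bigr => i _; rewrite mxE. Qed.

End Matrices.

Section Decomposition.
Variables (R : realType) (nt nc p : nat) (f g : R -> R).
Variables (Xt : 'M[R]_(nt, p)) (Xc : 'M[R]_(nc, p)) (Yc gam : 'cV[R]_nc).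
Variables (bc bh : 'cV[R]_p).

Lemma imbalance_dot :
  \sum_j (nt%:R^-1 *: (Xt^T *m appf g (Xt *m bh))
          - Xc^T *m Wdiag g (Xc *m bh) *m gam) j 0 * (bh - bc) j 0 =
  nt%:R^-1 * \sum_i (Xt *m (bh - bc)) i 0 * g ((Xt *m bh) i 0)
  - \sum_i (Xc *m (bh - bc)) i 0 * (g ((Xc *m bh) i 0) * gam i 0).
Proof.
under eq_bigr do rewrite mulrC.
rewrite -dot_cV mulmxBr -scalemxAr -mulmxA /Wdiag mul_diag_mx !mulmxA -!trmx_mul.
rewrite mxE_scale_sub !dot_cV.
by congr (_ * _ - _); apply: eq_bigr => i _; rewrite !mxE.
Qed.

Lemma muhat_sub_mu_decomposition :
  muhat_c f Xt Xc Yc gam bh - mu_c f Xt bc =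
    \sum_j (nt%:R^-1 *: (Xt^T *m appf g (Xt *m bh))
            - Xc^T *m Wdiag g (Xc *m bh) *m gam) j 0 * (bh - bc) j 0
  + (\sum_i gam i 0 * linearization_error f g ((Xc *m bh) i 0) ((Xc *m bc) i 0)
     - nt%:R^-1 * \sum_i linearization_error f g ((Xt *m bh) i 0) ((Xt *m bc) i 0))
  + (gam^T *m (Yc - appf f (Xc *m bc))) 0 0.
Proof.
have treated : \sum_i f ((Xt *m bh) i 0) = \sum_i f ((Xt *m bc) i 0)
    + \sum_i (Xt *m (bh - bc)) i 0 * g ((Xt *m bh) i 0)
    - \sum_i linearization_error f g ((Xt *m bh) i 0) ((Xt *m bc) i 0).
  rewrite -big_split -sumrB; apply: eq_bigr => i _.
  by rewrite /= mulmxBr mxE_sub /linearization_error; ring.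
have control : \sum_i gam i 0 * (Yc i 0 - f ((Xc *m bh) i 0)) =
    - \sum_i (Xc *m (bh - bc)) i 0 * (g ((Xc *m bh) i 0) * gam i 0)
    + \sum_i gam i 0 * linearization_error f g ((Xc *m bh) i 0) ((Xc *m bc) i 0)
    + (gam^T *m (Yc - appf f (Xc *m bc))) 0 0.
  rewrite dot_cV -sumrN -!big_split; apply: eq_bigr => i _.
  by rewrite /= mulmxBr !mxE_sub appfE /linearization_error; ring.
by rewrite imbalance_dot /muhat_c /mu_c treated control; ring.
Qed.
End Decomposition.

Section Remainders.
Variable R : realType.

Lemma norm_convex_comb_le n (w r : 'I_n -> R) (K : R) :
  (forall i, 0 <= w i) -> \sum_i w i = 1 -> (forall i, `|r i| <= K) ->
  `|\sum_i w i * r i| <= K.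
Proof.
move=> w_ge0 w_sum1 rK; apply: le_trans (ler_norm_sum _ _ _) _.
rewrite -[K]mul1r -w_sum1 mulr_suml; apply: ler_sum => i _.
by rewrite normrM ger0_norm // ler_wpM2l.
Qed.

Lemma norm_mean_le n (r : 'I_n -> R) (K : R) :
  0 <= K -> (forall i, `|r i| <= K) -> `|n%:R^-1 * \sum_i r i| <= K.
Proof.
move=> K_ge0 rK; have [->|n_neq0] := eqVneq (n%:R : R) 0.
  by rewrite invr0 mul0r normr0.
rewrite normrM ger0_norm ?invr_ge0 // ler_pdivrMl ?lt0r ?n_neq0 ?ler0n //.
apply: le_trans (ler_norm_sum _ _ _) _.
by rewrite mulr_natl -[n in K *+ n]card_ord -sumr_const ler_sum.
Qed.

Lemma linearization_error_mulmx_le m p (f : R -> R) (X : 'M[R]_(m, p))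
    (b b' : 'cV[R]_p) un M i :
  (forall x, derivable f x 1) -> (forall x, derivable (derive1 f) x 1) ->
  (forall z, `|z| <= un -> `|derive1 (derive1 f) z| <= M) ->
  `|(X *m b) i 0| <= un -> `|(X *m b') i 0| <= un ->
  `|linearization_error f (derive1 f) ((X *m b) i 0) ((X *m b') i 0)| <=
    M * (mxnorm_inf X * norm1 (b - b')) ^+ 2.
Proof.
move=> df ddf f2M b_un b'_un.
have M_ge0 : 0 <= M by apply: le_trans (f2M _ b_un).
apply: le_trans (taylor1_bound df ddf f2M b_un b'_un) _.
rewrite ler_wpM2l // -real_normK ?num_real //.
rewrite lerXn2r ?nnegrE ?mulr_ge0 ?mxnorm_inf_ge0 ?norm1_ge0 //.
by rewrite -normrN opprB -mxE_sub -mulmxBr norm_mulmx_le.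
Qed.

End Remainders.

Theorem theorem1 (R : realType) :
  exists C : R, 0 < C /\
  forall (p nt nc : nat) (psi : R -> R)
    (Xt : 'M[R]_(nt, p)) (Xc : 'M[R]_(nc, p))
    (Yc : 'cV[R]_nc) (gam : 'cV[R]_nc) (bc bh : 'cV[R]_p)
    (un M2 M3 : R),
  C3 psi ->
  (forall i, 0 <= gam i 0) -> \sum_(i < nc) gam i 0 = 1 ->
  0 < un -> 0 < M2 -> 0 < M3 ->
  (forall z : R, `|z| <= un -> `|derive1 (derive1 psi) z| <= M2 * ln p%:R) ->
  (forall z : R, `|z| <= un ->
     `|derive1 (derive1 (derive1 psi)) z| <= M3 * Num.sqrt ((nt + nc)%:R / ln p%:R)) ->
  (forall i, `|(Xt *m bc) i 0| <= un) -> (forall i, `|(Xc *m bc) i 0| <= un) ->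
  (forall i, `|(Xt *m bh) i 0| <= un) -> (forall i, `|(Xc *m bh) i 0| <= un) ->
  let n : R := (nt + nc)%:R in
  let delta := bh - bc in
  let epsc := Yc - appf psi (Xc *m bc) in
  `|muhat_c psi Xt Xc Yc gam bh - mu_c psi Xt bc| <=
    mxnorm_inf (nt%:R^-1 *: (Xt^T *m appf (derive1 psi) (Xt *m bh))
                - Xc^T *m Wdiag (derive1 psi) (Xc *m bh) *m gam) * norm1 delta
  + mxnorm_inf (nt%:R^-1 *: ((Xt^T *t Xt^T) *m vecmx (Wdiag (derive1 (derive1 psi)) (Xt *m bh)))
                - Vmat (derive1 (derive1 psi)) Xc bh *m gam) * norm1 delta ^+ 2
  + `|(gam^T *m epsc) 0 0|
  + C * (M2 * ln p%:R * (mxnorm_inf Xt ^+ 2 + mxnorm_inf Xc ^+ 2) * norm1 delta ^+ 2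
         + M3 * Num.sqrt (n / ln p%:R) * (mxnorm_inf Xt ^+ 3 + mxnorm_inf Xc ^+ 3)
             * norm1 delta ^+ 3).
Proof.
exists 1; split=> // p nt nc psi Xt Xc Yc gam bc bh un M2 M3 [d1 [d2 _]] gam_ge0
  gam_sum1 un_gt0 _ M3_gt0 psi2_le _ Xtbc_un Xcbc_un Xtbh_un Xcbh_un /=.
set M := M2 * ln p%:R in psi2_le *.
have M_ge0 : 0 <= M by apply: le_trans (normr_ge0 _) (psi2_le 0 _); rewrite normr0 ltW.
set G := (X in mxnorm_inf X * norm1 _ + _).
have dot_le : `|\sum_j G j 0 * (bh - bc) j 0| <= mxnorm_inf G * norm1 (bh - bc).
  by apply: norm_sum_mul_le_norm1 => j; apply: mxnorm_inf_ge.
have rem_le :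
  `|\sum_i gam i 0 * linearization_error psi (derive1 psi) ((Xc *m bh) i 0) ((Xc *m bc) i 0)
    - nt%:R^-1 * \sum_i linearization_error psi (derive1 psi) ((Xt *m bh) i 0) ((Xt *m bc) i 0)|
  <= M * (mxnorm_inf Xc * norm1 (bh - bc)) ^+ 2 + M * (mxnorm_inf Xt * norm1 (bh - bc)) ^+ 2.
  apply: le_trans (ler_normB _ _) _; apply: lerD.
    by apply: norm_convex_comb_le => // i; exact: linearization_error_mulmx_le d1 d2 psi2_le _ _.
  apply: norm_mean_le => [|i]; first by rewrite mulr_ge0 ?sqr_ge0.
  exact: linearization_error_mulmx_le d1 d2 psi2_le _ _.
set T2 := mxnorm_inf _ * norm1 (bh - bc) ^+ 2.
have T2_ge0 : 0 <= T2 by rewrite mulr_ge0 ?mxnorm_inf_ge0 ?exprn_ge0 ?norm1_ge0.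
set Z := M3 * _ * _ * _.
have Z_ge0 : 0 <= Z.
  by rewrite !mulr_ge0 ?addr_ge0 ?exprn_ge0 ?norm1_ge0 ?mxnorm_inf_ge0 ?sqrtr_ge0 // ltW.
rewrite (muhat_sub_mu_decomposition _ (derive1 psi)).
apply: le_trans (ler_normD _ _) _; apply: le_trans (lerD (ler_normD _ _) (lexx _)) _.
lra.
Qed.
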